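(* Let $[\cdot]_{\mathbb{C}}:\mathbb{H}^d\to\mathbb{C}^{2d}$, $z+wj\mapsto\begin{pmatrix}z\\ \bar w\end{pmatrix}$, and let $v_1,\dots,v_n\in\mathbb{H}^d$. (1) If $([v_1]_{\mathbb{C}},\dots,[v_n]_{\mathbb{C}})$ is a tight frame for $\mathbb{C}^{2d}$, then $(v_1,\dots,v_n)$ is a tight frame for $\mathbb{H}^d$. (2) If $(v_1,\dots,v_n)$ is a tight frame for $\mathbb{H}^d$, then $([v_j]_{\mathbb{C}})_{j=1}^n$ is a tight frame for $\mathbb{C}^{2d}$ if and only if $$\sum_j\sum_k|\operatorname{Co}_1(\langle v_j,v_k\rangle)|^2=\sum_j\sum_k|\operatorname{Co}_2(\langle v_j,v_k\rangle)|^2.$$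
   Context: Every quaternion (and entrywise every quaternionic vector) is written uniquely as $z+wj$ with $z,w$ complex. For $q=z+wj\in\mathbb{H}$, $\operatorname{Co}_1(q)=z$ and $\operatorname{Co}_2(q)=\bar w$, so $|q|^2=|\operatorname{Co}_1(q)|^2+|\operatorname{Co}_2(q)|^2$. $\mathbb{H}^d$ is a right vector space; inner products are Euclidean, $\langle v,w\rangle=\sum_j\overline{w_j}v_j$. A sequence $(u_j)$ is a tight frame for $\mathbb{F}^D$ if there is $A>0$ with $A\|u\|^2=\sum_j|\langle u,u_j\rangle|^2$ for all $u\in\mathbb{F}^D$. *)

From HB Require Import structures.
From mathcomp Require Import all_boot all_order all_algebra.
From mathcomp Require Export complex.
Set Implicit Arguments. Unset Strict Implicit. Unset Printing Implicit Defensive.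
Import Order.TTheory GRing.Theory Num.Theory.
Local Open Scope ring_scope.
Local Open Scope complex_scope.

Section Quat.
Variable R : rcfType.

Definition cabs2 (c : R[i]) : R := (complex.Re c) ^+ 2 + (complex.Im c) ^+ 2.

(* A quaternion z + w j, with z w complex. *)
Record quat := Quat { qz : R[i]; qw : R[i] }.

Definition Co1 (q : quat) : R[i] := qz q.
Definition Co2 (q : quat) : R[i] := (qw q)^*.

Definition qabs2 (q : quat) : R := cabs2 (Co1 q) + cabs2 (Co2 q).

Definition qadd (p q : quat) : quat := Quat (qz p + qz q) (qw p + qw q).
Definition qzero : quat := Quat 0 0.
(* (z1 + w1 j)(z2 + w2 j) = (z1 z2 - w1 conj w2) + (z1 w2 + w1 conj z2) j,
   using j z = (conj z) j and j^2 = -1. *)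
Definition qmul (p q : quat) : quat :=
  Quat (qz p * qz q - qw p * (qw q)^*) (qz p * qw q + qw p * (qz q)^*).
Definition qconj (q : quat) : quat := Quat (qz q)^* (- qw q).

Definition qinner (d : nat) (v w : 'I_d -> quat) : quat :=
  foldr qadd qzero [seq qmul (qconj (w i)) (v i) | i <- enum 'I_d].
Definition qnorm2 (d : nat) (v : 'I_d -> quat) : R := \sum_(i < d) qabs2 (v i).

Definition cinner (D : nat) (v w : 'I_D -> R[i]) : R[i] :=
  \sum_(i < D) (w i)^* * v i.
Definition cnorm2 (D : nat) (v : 'I_D -> R[i]) : R := \sum_(i < D) cabs2 (v i).

Definition qtight_frame (d n : nat) (u : 'I_n -> 'I_d -> quat) : Prop :=
  exists A : R, 0 < A /\ forall x : 'I_d -> quat,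
    A * qnorm2 x = \sum_(j < n) qabs2 (qinner x (u j)).
Definition ctight_frame (D n : nat) (u : 'I_n -> 'I_D -> R[i]) : Prop :=
  exists A : R, 0 < A /\ forall x : 'I_D -> R[i],
    A * cnorm2 x = \sum_(j < n) cabs2 (cinner x (u j)).

(* [z + w j]_C = (z ; conj w) in C^(2d), first d coordinates z, last d conj w *)
Definition toC (d : nat) (v : 'I_d -> quat) : 'I_(d + d) -> R[i] :=
  fun i => match split i with
           | inl a => Co1 (v a)
           | inr b => Co2 (v b)
           end.
End Quat.

From mathcomp Require Import all_boot all_order all_algebra.
From mathcomp Require Import complex ring.
Import Order.TTheory GRing.Theory Num.Theory.
Set Implicit Arguments. Unset Strict Implicit. Unset Printing Implicit Defensive.
Local Open Scope ring_scope.

(* Write [x]_C = toC x in C^(2d).  Everything rests on two coordinate facts: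
   Co1 <x, u> = <[x]_C, [u]_C> and Co2 <x, u> = conj <[x (-j)]_C, [u]_C>,
   where x (-j) is x multiplied on the right by -j, a norm-preserving map.
   Hence |<x, u>|^2 = |<[x]_C,[u]_C>|^2 + |<[x(-j)]_C,[u]_C>|^2, which gives
   part (1) (with twice the frame bound) and the forward direction of (2).

   The converse of (2) uses the Frobenius criterion for complex frames: if
   S = sum_j u_j u_j^* is the frame operator, then
   ||S - c I||_F^2 = sum_{j,k} |<u_j,u_k>|^2 - 2 c sum_j ||u_j||^2 + c^2 D,
   so a family whose frame potential and total energy make this vanish is
   tight with bound c.  For a quaternionic tight frame with bound A, testing
   on the standard basis gives sum_j ||v_j||^2 = d A, and the balance
   hypothesis makes the complex frame potential equal to A d A / 2; the
   criterion then applies with c = A / 2. *)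

Section ComplexModulus.
Variable R : rcfType.
Implicit Types c : R[i].
Local Notation rc := (real_complex R).

Lemma cabs2E c : rc (cabs2 c) = c * c^*.
Proof.
case: c => a b; rewrite /cabs2 /=.
by apply/eqP; rewrite eq_complex /=; apply/andP; split; apply/eqP; ring.
Qed.

(* Morphism laws of the embedding R -> C, stated with its head symbol so that
   later rewrites by cabs2E still match. *)
Lemma rc_sum (I : Type) (s : seq I) (P : pred I) (F : I -> R) :
  rc (\sum_(i <- s | P i) F i) = \sum_(i <- s | P i) rc (F i).
Proof. exact: rmorph_sum. Qed.

Lemma rc_conj (r : R) : (rc r)^* = rc r.
Proof. exact: conjc_real. Qed.

Lemma cabs2_ge0 c : 0 <= cabs2 c.
Proof. by rewrite /cabs2 addr_ge0 // sqr_ge0. Qed.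

Lemma cabs2_conj c : cabs2 c^* = cabs2 c.
Proof. by case: c => a b; rewrite /cabs2 /= sqrrN. Qed.

Lemma cabs2N c : cabs2 (- c) = cabs2 c.
Proof. by case: c => a b; rewrite /cabs2 /= !sqrrN. Qed.

Lemma cabs2_eq0 c : cabs2 c = 0 -> c = 0.
Proof.
move=> c0; have : rc (cabs2 c) = 0 by rewrite c0 rmorph0.
by rewrite cabs2E => /eqP; rewrite mulf_eq0 conjC_eq0 orbb => /eqP.
Qed.

Lemma sum_kronecker (I : finType) (F : I -> R[i]) (p : I) :
  \sum_(q : I) F q * (q == p)%:R = F p.
Proof.
rewrite (bigD1 p) //= eqxx mulr1 big1 ?addr0 // => q /negbTE ->.
by rewrite mulr0.
Qed.

End ComplexModulus.

Section QuaternionCoordinates.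
Variables (R : rcfType) (d : nat).
Implicit Types x u : 'I_d -> quat R.

Lemma toC_lshift x a : toC x (lshift d a) = Co1 (x a).
Proof. by rewrite /toC -[lshift d a]/(unsplit (inl a)) unsplitK. Qed.

Lemma toC_rshift x a : toC x (rshift d a) = Co2 (x a).
Proof. by rewrite /toC -[rshift d a]/(unsplit (inr a)) unsplitK. Qed.

Lemma qinnerE x u : qinner x u =
  Quat (\sum_(i < d) ((qz (u i))^* * qz (x i) + qw (u i) * (qw (x i))^*))
       (\sum_(i < d) ((qz (u i))^* * qw (x i) - qw (u i) * (qz (x i))^*)).
Proof.
have foldr_qadd (s : seq 'I_d) (f : 'I_d -> quat R) :
    foldr (@qadd R) (qzero R) [seq f i | i <- s] =
    Quat (\sum_(i <- s) qz (f i)) (\sum_(i <- s) qw (f i)).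
  by elim: s => [|a s IH] /=; rewrite ?big_nil ?IH ?big_cons.
rewrite /qinner foldr_qadd !big_enum /=.
by congr Quat; apply: eq_bigr => i _ /=; rewrite ?mulNr ?opprK.
Qed.

(* Right multiplication by -j:  (z + w j)(-j) = w - z j. *)
Definition qmulNj x : 'I_d -> quat R := fun a => Quat (qw (x a)) (- qz (x a)).

Lemma Co1_qinner x u : Co1 (qinner x u) = cinner (toC x) (toC u).
Proof.
rewrite qinnerE /cinner big_split_ord /= -big_split /=; apply: eq_bigr => i _.
by rewrite !toC_lshift !toC_rshift /Co1 /Co2 conjCK mulrC.
Qed.

Lemma Co2_qinner x u : Co2 (qinner x u) = (cinner (toC (qmulNj x)) (toC u))^*.
Proof.
rewrite qinnerE /cinner big_split_ord /= -big_split /= /Co2 /=.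
congr (_^*); apply: eq_bigr => i _.
by rewrite !toC_lshift !toC_rshift /Co1 /Co2 /qmulNj /= conjCK rmorphN; ring.
Qed.

Lemma qabs2_qinner x u : qabs2 (qinner x u) =
  cabs2 (cinner (toC x) (toC u)) + cabs2 (cinner (toC (qmulNj x)) (toC u)).
Proof. by rewrite /qabs2 Co1_qinner Co2_qinner cabs2_conj. Qed.

Lemma qnorm2_toC x : qnorm2 x = cnorm2 (toC x).
Proof.
rewrite /cnorm2 big_split_ord /= -big_split /=; apply: eq_bigr => i _.
by rewrite toC_lshift toC_rshift.
Qed.

Lemma qnorm2_mulNj x : qnorm2 (qmulNj x) = qnorm2 x.
Proof.
apply: eq_bigr => i _; rewrite /qabs2 /Co1 /Co2 /qmulNj /=.
by rewrite cabs2_conj cabs2N cabs2_conj addrC.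
Qed.

Definition qbasis (a : 'I_d) : 'I_d -> quat R := fun b => Quat (b == a)%:R 0.

Lemma qabs2_qinner_basis a u : qabs2 (qinner (qbasis a) u) = qabs2 (u a).
Proof.
rewrite qinnerE /qbasis /qabs2 /Co1 /Co2 /=.
under eq_bigr do rewrite conjC0 mulr0 addr0.
under [X in cabs2 X^*]eq_bigr do rewrite mulr0 conjC_nat add0r -mulNr.
by rewrite !sum_kronecker !cabs2_conj cabs2N.
Qed.

Lemma qnorm2_basis a : qnorm2 (qbasis a) = 1.
Proof.
have qabs2_basis b : qabs2 (qbasis a b) = (b == a)%:R.
  by rewrite /qabs2 /Co1 /Co2 /qbasis /cabs2 /=; case: (b == a);
     rewrite ?oppr0 ?expr1n expr0n /= !addr0.
rewrite /qnorm2; under eq_bigr do rewrite qabs2_basis.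
by rewrite (bigD1 a) //= eqxx big1 ?addr0 // => b /negbTE ->.
Qed.

Lemma qtight_energy n (v : 'I_n -> 'I_d -> quat R) (A : R) :
  (forall x, A * qnorm2 x = \sum_(j < n) qabs2 (qinner x (v j))) ->
  \sum_(j < n) qnorm2 (v j) = d%:R * A.
Proof.
move=> tightA; transitivity (\sum_(a < d) A * qnorm2 (qbasis a)); last first.
  by under eq_bigr do rewrite qnorm2_basis mulr1; rewrite sumr_const card_ord mulr_natl.
under [RHS]eq_bigr do rewrite tightA; rewrite exchange_big /=.
by apply: eq_bigr => j _; apply: eq_bigr => a _; rewrite qabs2_qinner_basis.
Qed.

End QuaternionCoordinates.

Section FrobeniusCriterion.
Variables (R : rcfType) (D n : nat) (u : 'I_n -> 'I_D -> R[i]).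
Local Notation rc := (real_complex R).

Definition frame_op (p q : 'I_D) : R[i] := \sum_(j < n) u j p * (u j q)^*.

Lemma frame_op_conj p q : (frame_op p q)^* = frame_op q p.
Proof.
rewrite /frame_op rmorph_sum; apply: eq_bigr => j _.
by rewrite rmorphM /= conjCK mulrC.
Qed.

Lemma frame_sum_expand (y : 'I_D -> R[i]) :
  rc (\sum_(j < n) cabs2 (cinner y (u j))) =
  \sum_(p < D) \sum_(q < D) y p * (y q)^* * frame_op q p.
Proof.
rewrite rc_sum; transitivity
  (\sum_(j < n) \sum_(p < D) \sum_(q < D) y p * (y q)^* * (u j q * (u j p)^*)).
  apply: eq_bigr => j _; rewrite cabs2E /cinner rmorph_sum big_distrl /=.
  apply: eq_bigr => p _; rewrite big_distrr /=; apply: eq_bigr => q _.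
  by rewrite rmorphM /= conjCK; ring.
rewrite exchange_big /=; apply: eq_bigr => p _; rewrite exchange_big /=.
by apply: eq_bigr => q _; rewrite /frame_op big_distrr.
Qed.

Lemma frame_potential_expand :
  rc (\sum_(j < n) \sum_(k < n) cabs2 (cinner (u j) (u k))) =
  \sum_(p < D) \sum_(q < D) frame_op p q * (frame_op p q)^*.
Proof.
rewrite rc_sum; under eq_bigr do rewrite frame_sum_expand.
rewrite exchange_big /=; apply: eq_bigr => p _; rewrite exchange_big /=.
by apply: eq_bigr => q _; rewrite -big_distrl /= frame_op_conj.
Qed.

Lemma frobenius_distance (c : R) :
  \sum_(p < D) \sum_(q < D) cabs2 (frame_op p q - rc c * (p == q)%:R) =
  \sum_(j < n) \sum_(k < n) cabs2 (cinner (u j) (u k))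
  - (c + c) * \sum_(j < n) cnorm2 (u j) + c ^+ 2 * D%:R.
Proof.
apply: (@complexI R).
have entry p q : rc (cabs2 (frame_op p q - rc c * (p == q)%:R)) =
    frame_op p q * (frame_op p q)^*
    - rc c * (((frame_op p q)^* + frame_op p q) * (q == p)%:R)
    + rc c ^+ 2 * (q == p)%:R.
  rewrite cabs2E rmorphB rmorphM /= rc_conj conjC_nat eq_sym.
  by case: (q == p); rewrite ?mulr1 ?mulr0 ?subr0 ?addr0; ring.
have diag p : frame_op p p = rc (\sum_(j < n) cabs2 (u j p)).
  by rewrite rc_sum; apply: eq_bigr => j _; rewrite cabs2E.
rewrite rc_sum; under eq_bigr do
  rewrite rc_sum (eq_bigr _ (fun q _ => entry _ q)) big_split sumrB /=
          -mulr_sumr !sum_kronecker diag rc_conj.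
rewrite big_split sumrB /= -mulr_sumr big_split /= sumr_const card_ord.
have energy : \sum_(p < D) \sum_(j < n) cabs2 (u j p) = \sum_(j < n) cnorm2 (u j).
  by rewrite exchange_big.
rewrite -frame_potential_expand -!rc_sum energy.
rewrite !(rmorphD, rmorphN, rmorphM, rmorphXn) /= rmorph_nat mulr_natr.
ring.
Qed.

Lemma ctight_of_scalar_frame_op (c : R) :
  (forall p q, frame_op p q = rc c * (p == q)%:R) ->
  forall y, c * cnorm2 y = \sum_(j < n) cabs2 (cinner y (u j)).
Proof.
move=> scalarS y; apply: (@complexI R).
rewrite frame_sum_expand rmorphM /= /cnorm2 rc_sum mulr_sumr.
apply: eq_bigr => p _; under eq_bigr do rewrite scalarS mulrA.
by rewrite sum_kronecker cabs2E mulrC.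
Qed.

Lemma ctight_of_frame_potential (c : R) :
  \sum_(j < n) \sum_(k < n) cabs2 (cinner (u j) (u k))
  - (c + c) * \sum_(j < n) cnorm2 (u j) + c ^+ 2 * D%:R = 0 ->
  forall y, c * cnorm2 y = \sum_(j < n) cabs2 (cinner y (u j)).
Proof.
rewrite -frobenius_distance => dist0; apply: ctight_of_scalar_frame_op => p q.
apply/eqP; rewrite -subr_eq0; apply/eqP/cabs2_eq0.
have row0 := psumr_eq0P (fun p _ => sumr_ge0 _ (fun q _ => cabs2_ge0 _)) dist0.
exact: (psumr_eq0P (fun q _ => cabs2_ge0 _) (row0 p isT)).
Qed.

End FrobeniusCriterion.

Section QuaternionicFrames.
Variables (R : rcfType) (d n : nat) (v : 'I_n -> 'I_d -> quat R).

Lemma qtight_of_ctight :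
  ctight_frame (fun j => toC (v j)) -> qtight_frame v.
Proof.
case=> A [A_gt0 tightA]; exists (A + A); split; first by rewrite addr_gt0.
move=> x; under eq_bigr do rewrite qabs2_qinner; rewrite big_split /=.
by rewrite -!tightA -!qnorm2_toC qnorm2_mulNj mulrDl.
Qed.

(* Forward direction of (2): both coordinate sums equal B times the energy. *)
Lemma Co_balance_of_ctight :
  ctight_frame (fun j => toC (v j)) ->
  \sum_(j < n) \sum_(k < n) cabs2 (Co1 (qinner (v j) (v k)))
  = \sum_(j < n) \sum_(k < n) cabs2 (Co2 (qinner (v j) (v k))).
Proof.
case=> B [_ tightB]; apply: eq_bigr => j _.
under eq_bigr do rewrite Co1_qinner.
under [RHS]eq_bigr do rewrite Co2_qinner cabs2_conj.
by rewrite -!tightB -!qnorm2_toC qnorm2_mulNj.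
Qed.

(* Converse direction of (2): balance makes the complex frame potential
   equal to A T / 2 with T = d A, so the Frobenius criterion applies with
   c = A / 2. *)
Lemma ctight_of_Co_balance :
  qtight_frame v ->
  \sum_(j < n) \sum_(k < n) cabs2 (Co1 (qinner (v j) (v k)))
  = \sum_(j < n) \sum_(k < n) cabs2 (Co2 (qinner (v j) (v k))) ->
  ctight_frame (fun j => toC (v j)).
Proof.
case=> A [A_gt0 tightA] balance.
set T := \sum_(j < n) cnorm2 (toC (v j)).
set X := \sum_(j < n) \sum_(k < n) cabs2 (cinner (toC (v j)) (toC (v k))).
have energy : T = d%:R * A.
  by rewrite -(qtight_energy tightA); apply: eq_bigr => j _; rewrite qnorm2_toC.
have potential : X + X = A * T.
  rewrite mulr_sumr; under [RHS]eq_bigr do rewrite -qnorm2_toC tightA /qabs2 big_split.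
  rewrite big_split /= -balance.
  by congr (_ + _); apply: eq_bigr => j _; apply: eq_bigr => k _; rewrite Co1_qinner.
exists (A / 2); split; first by rewrite divr_gt0.
apply: ctight_of_frame_potential; rewrite -/T -/X.
have -> : X = A * T / 2 by rewrite -potential; field.
by rewrite energy natrD; field.
Qed.

End QuaternionicFrames.

Theorem theorem10 (R : rcfType) (d n : nat) (v : 'I_n -> 'I_d -> quat R) :
  (ctight_frame (fun j => toC (v j)) -> qtight_frame v) /\
  (qtight_frame v ->
    (ctight_frame (fun j => toC (v j)) <->
     \sum_(j < n) \sum_(k < n) cabs2 (Co1 (qinner (v j) (v k)))
     = \sum_(j < n) \sum_(k < n) cabs2 (Co2 (qinner (v j) (v k))))).
Proof.
split; first exact: qtight_of_ctight.
move=> qtight; split; first exact: Co_balance_of_ctight.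
exact: ctight_of_Co_balance.
Qed.
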